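(* Let $S\subset\mathbb{R}^n$ be a real algebraic variety given as the common zero set of $m$ real polynomials $F_1,\dots,F_m$ in unknowns $x_1,\dots,x_n$, such that every point $(x_1,\dots,x_n)\in S$ satisfies $0<x_i$ for $i=1,\dots,n$ and $\sum_{i=1}^n x_i<1$. Suppose the highest power of $x_i$ occurring in $F_j$ is $x_i^{d_{ij}}$, and set $$D=-1+\sum_{j=1}^m(1+d_{1j})(1+d_{2j})\cdots(1+d_{nj}).$$ Then there is a $3$-person game in which the first player has $n+1$ pure strategies, the second player has $D-m+1$ pure strategies and the third player has $D+1$ pure strategies, whose set of totally mixed Nash equilibria is stably isomorphic to $S$.
   Context: A real algebraic variety is the set of common real zeros in $\mathbb{R}^n$ of finitely many real polynomials. Two semialgebraic sets are semialgebraically isomorphic if there is a homeomorphism between them whose graph is semialgebraic; they are stably isomorphic if they are equivalent under the equivalence relation generated by semialgebraic isomorphisms and the canonical projections $W\times\mathbb{R}^k\to W$. A finite normal form game consists of players $I=\{1,\dots,N\}$, finite pure strategy sets $S_i=\{s_{i0},\dots,s_{id_i}\}$, and payoffs $u_i:\prod_i S_i\to\mathbb{R}$. A mixed strategy of player $i$ is a probability vector $\sigma_i$ on $S_i$; expected payoffs are multilinear: $u_i(\sigma)=\sum_{s}u_i(s)\prod_k\sigma_k(s_k)$, and $u_i(s_{ij},\sigma_{-i})$ denotes player $i$'s expected payoff when $i$ plays $s_{ij}$ and the others play according to $\sigma$. A profile $\sigma$ is a totally mixed Nash equilibrium if $0<\sigma_i(s_{ij})<1$ for all $i,j$ and $u_i(s_{ij},\sigma_{-i})=u_i(s_{i0},\sigma_{-i})$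 for all $i$ and $j=1,\dots,d_i$. The set of totally mixed Nash equilibria is regarded as a subset of $\mathbb{R}^{\sum_i d_i}$ via the coordinates $(\sigma_i(s_{ij}))_{1\le j\le d_i}$. *)

From HB Require Import structures.
From mathcomp Require Import all_boot all_order all_algebra.
From mathcomp Require Import reals.
From mathcomp Require Import mpoly.
Set Implicit Arguments. Unset Strict Implicit. Unset Printing Implicit Defensive.
Import Order.TTheory GRing.Theory Num.Theory.
Local Open Scope ring_scope.

Section Defs.
Variable R : realType.

Definition pt (T : finType) := T -> R.

Definition peval (T : finType) (p : {mpoly R[#|T|]}) (x : pt T) : R :=
  p.@[fun i : 'I_#|T| => x (enum_val i)].

Inductive semialgebraic (T : finType) : (pt T -> Prop) -> Prop :=
| sa_pos (p : {mpoly R[#|T|]}) : semialgebraic (fun x => 0 < peval p x)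
| sa_zero (p : {mpoly R[#|T|]}) : semialgebraic (fun x => peval p x = 0)
| sa_union A B : semialgebraic A -> semialgebraic B ->
    semialgebraic (fun x => A x \/ B x)
| sa_inter A B : semialgebraic A -> semialgebraic B ->
    semialgebraic (fun x => A x /\ B x)
| sa_compl A : semialgebraic A -> semialgebraic (fun x => ~ A x)
| sa_ext A B : (forall x, A x <-> B x) -> semialgebraic A -> semialgebraic B.

Definition continuous_on (T1 T2 : finType) (A : pt T1 -> Prop)
  (f : pt T1 -> pt T2) : Prop :=
  forall x, A x -> forall eps : R, 0 < eps -> exists2 delta : R, 0 < delta &
    forall y, A y -> (forall i, `|y i - x i| < delta) ->
      forall j, `|f y j - f x j| < eps.

Definition graph_on (T1 T2 : finType) (A : pt T1 -> Prop) (f : pt T1 -> pt T2)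
  : pt (T1 + T2)%type -> Prop :=
  fun z => A (fun i => z (inl i)) /\
           forall j, z (inr j) = f (fun i => z (inl i)) j.

Definition sa_isomorphic (T1 T2 : finType) (A : pt T1 -> Prop)
  (B : pt T2 -> Prop) : Prop :=
  exists (f : pt T1 -> pt T2) (g : pt T2 -> pt T1),
    [/\ (forall x, A x -> B (f x)),
        (forall y, B y -> A (g y)),
        (forall x, A x -> forall i, g (f x) i = x i),
        (forall y, B y -> forall j, f (g y) j = y j) &
       [/\ continuous_on A f, continuous_on B g & semialgebraic (graph_on A f)]].

Definition cyl (T : finType) (k : nat) (W : pt T -> Prop)
  : pt (T + 'I_k)%type -> Prop :=
  fun z => W (fun i => z (inl i)).

Inductive stably_isomorphic : forall (T1 T2 : finType),
    (pt T1 -> Prop) -> (pt T2 -> Prop) -> Prop :=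
| st_iso (T1 T2 : finType) (A : pt T1 -> Prop) (B : pt T2 -> Prop) :
    sa_isomorphic A B -> stably_isomorphic A B
| st_proj (T : finType) (k : nat) (W : pt T -> Prop) :
    semialgebraic W -> stably_isomorphic (@cyl _ k W) W
| st_refl (T : finType) (A : pt T -> Prop) : stably_isomorphic A A
| st_sym (T1 T2 : finType) (A : pt T1 -> Prop) (B : pt T2 -> Prop) :
    stably_isomorphic A B -> stably_isomorphic B A
| st_trans (T1 T2 T3 : finType) (A : pt T1 -> Prop) (B : pt T2 -> Prop)
    (C : pt T3 -> Prop) :
    stably_isomorphic A B -> stably_isomorphic B C -> stably_isomorphic A C.

(** Finite normal form games with N players; player i has the d i + 1 pure
    strategies s_i0, ..., s_i(d i), represented by 'I_(d i).+1. *)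
Definition profile (N : nat) (d : 'I_N -> nat) :=
  {dffun forall i : 'I_N, 'I_(d i).+1}.

Definition payoffs (N : nat) (d : 'I_N -> nat) := 'I_N -> profile d -> R.

Definition mixed (N : nat) (d : 'I_N -> nat) := forall i : 'I_N, 'I_(d i).+1 -> R.

Definition exp_payoff_pure (N : nat) (d : 'I_N -> nat) (u : payoffs d)
  (sigma : mixed d) (i : 'I_N) (j : 'I_(d i).+1) : R :=
  \sum_(s : profile d | s i == j) u i s * \prod_(k : 'I_N | k != i) sigma k (s k).

Arguments exp_payoff_pure {N d} u sigma i j.

Definition totally_mixed_NE (N : nat) (d : 'I_N -> nat) (u : payoffs d)
  (sigma : mixed d) : Prop :=
  [/\ (forall i, \sum_(j < (d i).+1) sigma i j = 1),
      (forall i (j : 'I_(d i).+1), 0 < sigma i j),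
      (forall i (j : 'I_(d i).+1), j != ord0 -> sigma i j < 1) &
      (forall i (j : 'I_(d i).+1),
         exp_payoff_pure u sigma i j = exp_payoff_pure u sigma i ord0)].

(** coordinate index set {(i, j) | 1 <= j <= d i}; the pair (i, j') with
    j' : 'I_(d i) stands for the strategy s_i(j'+1). *)
Definition coord (N : nat) (d : 'I_N -> nat) : finType :=
  {i : 'I_N & 'I_(d i)}.

(** the mixed profile with coordinates x:  sigma_i(s_ij) = x_(i,j) for j >= 1,
    sigma_i(s_i0) = 1 - sum_j x_(i,j) *)
Definition sigma_of (N : nat) (d : 'I_N -> nat) (x : pt (coord d)) : mixed d :=
  fun i j => match unlift ord0 j with
             | Some j' => x (Tagged (fun i => 'I_(d i)) j')
             | None => 1 - \sum_(j' < d i) x (Tagged (fun i => 'I_(d i)) j')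
             end.

Arguments sigma_of {N d} x i j.

Definition TMNE (N : nat) (d : 'I_N -> nat) (u : payoffs d) : pt (coord d) -> Prop :=
  fun x => totally_mixed_NE u (sigma_of x).

Definition zero_set (n m : nat) (F : 'I_m -> {mpoly R[n]}) : pt 'I_n -> Prop :=
  fun x => forall j, (F j).@[x] = 0.

(** the highest power of x_i occurring in p (0 for p = 0) *)
Definition deg_in (n : nat) (i : 'I_n) (p : {mpoly R[n]}) : nat :=
  \max_(mo <- msupp p) mo i.

(** D = -1 + sum_j prod_i (1 + d_ij)  (as a natural number; for m >= 1 the
    sum is >= 1, so the truncated predecessor is exact) *)
Definition Dnum (n m : nat) (F : 'I_m -> {mpoly R[n]}) : nat :=
  (\sum_(j < m) \prod_(i < n) (deg_in i (F j)).+1).-1.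

Definition game3_dims (n m D : nat) : 'I_3 -> nat :=
  fun k => nth 0%N [:: n; (D - m)%N; D] k.

End Defs.

From Pilot Require Import Defs.
From HB Require Import structures.
From mathcomp Require Import all_boot all_order all_algebra.
From mathcomp Require Import reals.
From mathcomp Require Import mpoly.
From mathcomp Require Import ring lra zify.
Import Order.TTheory GRing.Theory Num.Theory.
Local Open Scope ring_scope.
Set Implicit Arguments. Unset Strict Implicit. Unset Printing Implicit Defensive.

(* For each equation F_j consider the box of exponent vectors b with
   b_i <= deg_{x_i} F_j. Player 1 carries the point x, player 2 has one
   strategy per exponent vector lying strictly below the top of some box (there
   are at most D - m + 1 of them), and only player 3 has non-zero payoffs. Each
   pure strategy of player 3 is a bilinear relation in the strategies of
   players 1 and 2: for every such vector b != 0 the relation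
   y_b = x_i y_(b - e_i) forces y_b to be proportional to x^b, and for every
   equation the relation obtained by writing each monomial x^a of F_j as
   x_i y_(a - e_i) becomes F_j(x) y_0 = 0. Player 3 is indifferent iff all
   relations vanish, so the totally mixed equilibria are the points (x, y, z)
   with x in S, y determined by x and z any interior point of the D-simplex;
   that open simplex is mapped onto R^D by z_l |-> z_l/c - c/z_l, c = 1 - sum z.
   If no variable occurs in the F_j, then S is empty and a game without totally
   mixed equilibrium does the job. *)

(** * Polynomial functions and semialgebraic sets *)


Section PolynomialFunctions.
Context {R : realType} {T : finType}.
Implicit Types (f g : pt R T -> R).

Definition polyfun f := exists p : {mpoly R[#|T|]}, forall x, f x = peval p x.

Lemma polyfun_ext f g : (forall x, f x = g x) -> polyfun f -> polyfun g.
Proof. by move=> E [p Hp]; exists p => x; rewrite -E. Qed.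

Lemma polyfun_cst c : polyfun (fun _ => c).
Proof. by exists c%:MP => x; rewrite /peval mevalC. Qed.

Lemma polyfun_coord t : polyfun (fun x => x t).
Proof. by exists 'X_(enum_rank t) => x; rewrite /peval mevalXU enum_rankK. Qed.

Lemma polyfun_add f g : polyfun f -> polyfun g -> polyfun (fun x => f x + g x).
Proof.
by move=> [p Hp] [q Hq]; exists (p + q) => x; rewrite /peval mevalD -!/(peval _ _) Hp Hq.
Qed.

Lemma polyfun_opp f : polyfun f -> polyfun (fun x => - f x).
Proof. by move=> [p Hp]; exists (- p) => x; rewrite /peval mevalN -!/(peval _ _) Hp. Qed.

Lemma polyfun_sub f g : polyfun f -> polyfun g -> polyfun (fun x => f x - g x).
Proof. by move=> pf pg; apply: polyfun_add pf (polyfun_opp pg). Qed.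

Lemma polyfun_mul f g : polyfun f -> polyfun g -> polyfun (fun x => f x * g x).
Proof.
by move=> [p Hp] [q Hq]; exists (p * q) => x; rewrite /peval mevalM -!/(peval _ _) Hp Hq.
Qed.

Lemma polyfun_exp f k : polyfun f -> polyfun (fun x => f x ^+ k).
Proof.
move=> pf; elim: k => [|k IH]; first exact: polyfun_cst.
by apply: polyfun_ext (polyfun_mul pf IH) => x; rewrite exprS.
Qed.

Lemma polyfun_sum (I : Type) (r : seq I) (f : I -> pt R T -> R) :
  (forall i, polyfun (f i)) -> polyfun (fun x => \sum_(i <- r) f i x).
Proof.
move=> pf; elim: r => [|a r IH].
  by apply: polyfun_ext (polyfun_cst 0) => x; rewrite big_nil.
by apply: polyfun_ext (polyfun_add (pf a) IH) => x; rewrite big_cons.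
Qed.

Lemma polyfun_prod (I : Type) (r : seq I) (f : I -> pt R T -> R) :
  (forall i, polyfun (f i)) -> polyfun (fun x => \prod_(i <- r) f i x).
Proof.
move=> pf; elim: r => [|a r IH].
  by apply: polyfun_ext (polyfun_cst 1) => x; rewrite big_nil.
by apply: polyfun_ext (polyfun_mul (pf a) IH) => x; rewrite big_cons.
Qed.

Lemma polyfun_meval k (p : {mpoly R[k]}) (v : 'I_k -> pt R T -> R) :
  (forall i, polyfun (v i)) -> polyfun (fun x => p.@[fun i => v i x]).
Proof.
move=> pv; apply: polyfun_ext (fun x => esym (mevalE _ _)) _.
apply: polyfun_sum => mo; apply: polyfun_mul; first exact: polyfun_cst.
by apply: polyfun_prod => i; apply: polyfun_exp.
Qed.

Lemma semialgebraic_eq0 f : polyfun f -> semialgebraic (fun x => f x = 0).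
Proof. by move=> [p Hp]; apply: sa_ext (sa_zero p) => x; rewrite Hp. Qed.

Lemma semialgebraic_gt0 f : polyfun f -> semialgebraic (fun x => 0 < f x).
Proof. by move=> [p Hp]; apply: sa_ext (sa_pos p) => x; rewrite Hp. Qed.

Lemma semialgebraic_False : semialgebraic (fun _ : pt R T => False).
Proof.
by apply: sa_ext (semialgebraic_gt0 (polyfun_cst 0)) => x; rewrite ltxx.
Qed.

Lemma semialgebraic_forall (J : finType) (P : J -> pt R T -> Prop) :
  (forall j, semialgebraic (P j)) -> semialgebraic (fun x => forall j, P j x).
Proof.
move=> saP.
suff sa_s (s : seq J) : semialgebraic (fun x => forall j, j \in s -> P j x).
  apply: sa_ext (sa_s (enum J)) => x.
  by split=> Px j; [apply: Px; rewrite mem_enum | move=> _; apply: Px].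
elim: s => [|a s IH].
  by apply: sa_ext (semialgebraic_eq0 (polyfun_cst 0)) => x; split => // _ j.
apply: sa_ext (sa_inter (saP a) IH) => x; split => [[Pa Ps] j|Px].
  by rewrite in_cons => /predU1P [->|/Ps].
by split => [|j js]; apply: Px; rewrite in_cons ?eqxx // js orbT.
Qed.

End PolynomialFunctions.

Lemma semialgebraic_zero_set {R : realType} {n m : nat} (F : 'I_m -> {mpoly R[n]}) :
  semialgebraic (zero_set F).
Proof.
apply: semialgebraic_forall => j; apply: semialgebraic_eq0.
exact: polyfun_meval (fun i => polyfun_coord i).
Qed.

Section CoordinateChange.
Context {R : realType} {T1 T2 : finType} (h : T1 -> T2).

Definition pullback (z : pt R T2) : pt R T1 := fun i => z (h i).

Lemma polyfun_pullback (f : pt R T1 -> R) :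
  polyfun f -> polyfun (fun z => f (pullback z)).
Proof.
move=> [p Hp]; apply: polyfun_ext (fun z => esym (Hp (pullback z))) _.
exact: polyfun_meval (fun i => polyfun_coord (h (enum_val i))).
Qed.

Lemma semialgebraic_pullback (A : pt R T1 -> Prop) :
  semialgebraic A -> semialgebraic (fun z => A (pullback z)).
Proof.
elim=> [p|p|{}A B _ saA _ saB|{}A B _ saA _ saB|{}A _ saA|{}A B AB _ saA].
- by apply: semialgebraic_gt0; apply: polyfun_pullback; exists p.
- by apply: semialgebraic_eq0; apply: polyfun_pullback; exists p.
- exact: sa_union.
- exact: sa_inter.
- exact: sa_compl.
- by apply: sa_ext saA => z; apply: AB.
Qed.
End CoordinateChange.

(** * Continuity *)

Section Estimates.
Context {R : rcfType}.
Implicit Types a b e : R.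

Lemma dist_mul_lt a b a1 b1 e : `|a1 - a| * (`|b| + 1) < e / 2 ->
  `|b1 - b| < 1 -> `|a| * `|b1 - b| <= e / 2 -> `|a1 * b1 - a * b| < e.
Proof.
move=> close_a close_b1 close_b.
have norm_b1 : `|b1| <= `|b| + 1.
  by rewrite -(subrK b b1); apply: le_trans (ler_normD _ _) _; lra.
have : `|a1 - a| * `|b1| <= `|a1 - a| * (`|b| + 1) by rewrite ler_wpM2l.
have -> : a1 * b1 - a * b = (a1 - a) * b1 + a * (b1 - b) by ring.
move=> ?; apply: le_lt_trans (ler_normD _ _) _; rewrite !normrM; lra.
Qed.

Lemma dist_inv_lt a a1 e : 2 * `|a1 - a| < `|a| -> 2 * `|a1 - a| < e * `|a| ^+ 2 ->
  `|a1^-1 - a^-1| < e.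
Proof.
move=> close_a close_e.
have norm_a1 : `|a| < 2 * `|a1|.
  by move: (ler_normD a1 (a - a1)); rewrite addrC subrK distrC; lra.
have a0 : 0 < `|a| by apply: le_lt_trans close_a; rewrite mulr_ge0.
have a10 : 0 < `|a1| by lra.
have -> : a1^-1 - a^-1 = (a - a1) / (a1 * a).
  by field; rewrite -!normr_gt0 a0 a10.
rewrite normrM normfV normrM distrC ltr_pdivrMr ?mulr_gt0 //.
have : `|a| * `|a| <= 2 * `|a1| * `|a| by rewrite ler_pM2r //; lra.
have e0 : 0 < e.
  rewrite -(pmulr_lgt0 _ (exprn_gt0 2 a0)); apply: le_lt_trans close_e.
  by rewrite mulr_ge0.
rewrite expr2 in close_e; nra.
Qed.

Lemma dist_sqrt_lt a a1 e : 0 < a -> 0 < a1 -> `|a1 - a| < e * Num.sqrt a ->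
  `|Num.sqrt a1 - Num.sqrt a| < e.
Proof.
move=> a0 a10 close_a.
have sa0 : 0 < Num.sqrt a by rewrite sqrtr_gt0.
have sa10 : 0 < Num.sqrt a1 by rewrite sqrtr_gt0.
have -> : Num.sqrt a1 - Num.sqrt a = (a1 - a) / (Num.sqrt a1 + Num.sqrt a).
  have <- : (Num.sqrt a1 - Num.sqrt a) * (Num.sqrt a1 + Num.sqrt a) = a1 - a.
    by rewrite -subr_sqr !sqr_sqrtr // ltW.
  by rewrite mulfK // gt_eqF ?addr_gt0.
rewrite normrM normfV (gtr0_norm (addr_gt0 sa10 sa0)) ltr_pdivrMr ?addr_gt0 //.
have e0 : 0 < e.
  by rewrite -(pmulr_lgt0 _ sa0); apply: le_lt_trans close_a.
by apply: lt_le_trans close_a _; rewrite ler_pM2l //; lra.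
Qed.
End Estimates.

Definition continuous_on1 {R : realType} {T : finType} (A : pt R T -> Prop)
    (f : pt R T -> R) :=
  forall x, A x -> forall eps : R, 0 < eps ->
    exists2 delta : R, 0 < delta & forall y, A y ->
      (forall i, `|y i - x i| < delta) -> `|f y - f x| < eps.

Section ScalarContinuity.
Context {R : realType} {T : finType} {A : pt R T -> Prop}.
Implicit Types (f g : pt R T -> R).

Lemma continuous_on1_ext f g :
  (forall x, A x -> f x = g x) -> continuous_on1 A f -> continuous_on1 A g.
Proof.
move=> fg cf x Ax e e0; have [d d0 Hd] := cf x Ax e e0.
by exists d => // y Ay Hy; rewrite -!fg //; apply: Hd.
Qed.

Lemma continuous_on1_cst c : continuous_on1 A (fun _ => c).
Proof. by move=> x _ e e0; exists 1 => // y _ _; rewrite subrr normr0. Qed.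

Lemma continuous_on1_coord t : continuous_on1 A (fun x => x t).
Proof. by move=> x _ e e0; exists e. Qed.

Lemma continuous_on1_near2 f g x (e1 e2 : R) :
  continuous_on1 A f -> continuous_on1 A g -> A x -> 0 < e1 -> 0 < e2 ->
  exists2 delta : R, 0 < delta & forall y, A y ->
    (forall i, `|y i - x i| < delta) -> `|f y - f x| < e1 /\ `|g y - g x| < e2.
Proof.
move=> cf cg Ax e10 e20.
have [d1 d10 Hd1] := cf x Ax e1 e10; have [d2 d20 Hd2] := cg x Ax e2 e20.
exists (Num.min d1 d2) => [|y Ay Hy]; first by rewrite lt_min d10.
by split; [apply: Hd1 | apply: Hd2] => // i; move: (Hy i); rewrite lt_min => /andP[].
Qed.

Lemma continuous_on1_add f g :
  continuous_on1 A f -> continuous_on1 A g -> continuous_on1 A (fun x => f x + g x).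
Proof.
move=> cf cg x Ax e e0.
have e20 : 0 < e / 2 by lra.
have [d d0 Hd] := continuous_on1_near2 cf cg Ax e20 e20.
exists d => // y Ay /(Hd y Ay) [close_f close_g].
have -> : f y + g y - (f x + g x) = (f y - f x) + (g y - g x) by ring.
by apply: le_lt_trans (ler_normD _ _) _; lra.
Qed.

Lemma continuous_on1_mul f g :
  continuous_on1 A f -> continuous_on1 A g -> continuous_on1 A (fun x => f x * g x).
Proof.
move=> cf cg x Ax e e0.
pose e1 := e / 2 / (`|g x| + 1); pose e2 := Num.min 1 (e / 2 / (`|f x| + 1)).
have e10 : 0 < e1 by rewrite divr_gt0 ?ltr_wpDl //; lra.
have e20 : 0 < e2 by rewrite lt_min ltr01 divr_gt0 ?ltr_wpDl //; lra.
have [d d0 Hd] := continuous_on1_near2 cf cg Ax e10 e20.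
exists d => // y Ay /(Hd y Ay) [close_f]; rewrite lt_min => /andP [close_g1 close_g].
apply: dist_mul_lt close_g1 _; first by rewrite -ltr_pdivlMr ?ltr_wpDl.
have : `|g y - g x| * (`|f x| + 1) < e / 2 by rewrite -ltr_pdivlMr ?ltr_wpDl.
by move/ltW; apply: le_trans; rewrite mulrC ler_wpM2l // lerDl.
Qed.

Lemma continuous_on1_inv f : (forall x, A x -> f x != 0) ->
  continuous_on1 A f -> continuous_on1 A (fun x => (f x)^-1).
Proof.
move=> f_neq0 cf x Ax e e0.
have fx0 : 0 < `|f x| by rewrite normr_gt0 f_neq0.
have [d d0 Hd] := cf x Ax (Num.min (`|f x| / 2) (e * `|f x| ^+ 2 / 2))
  ltac:(by rewrite lt_min !divr_gt0 ?mulr_gt0 ?exprn_gt0).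
exists d => // y Ay /(Hd y Ay); rewrite lt_min => /andP [close1 close2].
by apply: dist_inv_lt; rewrite mulrC -ltr_pdivlMr.
Qed.

Lemma continuous_on1_sqrt f : (forall x, A x -> 0 < f x) ->
  continuous_on1 A f -> continuous_on1 A (fun x => Num.sqrt (f x)).
Proof.
move=> f_gt0 cf x Ax e e0.
have [d d0 Hd] := cf x Ax (e * Num.sqrt (f x))
  ltac:(by rewrite mulr_gt0 ?sqrtr_gt0 ?f_gt0).
by exists d => // y Ay /(Hd y Ay); apply: dist_sqrt_lt; apply: f_gt0.
Qed.

Lemma continuous_on1_sum (I : Type) (r : seq I) (f : I -> pt R T -> R) :
  (forall i, continuous_on1 A (f i)) -> continuous_on1 A (fun x => \sum_(i <- r) f i x).
Proof.
move=> cf; elim: r => [|a r IH].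
  by apply: continuous_on1_ext (continuous_on1_cst 0) => x _; rewrite big_nil.
by apply: continuous_on1_ext (continuous_on1_add (cf a) IH) => x _; rewrite big_cons.
Qed.

Lemma continuous_on1_prod (I : Type) (r : seq I) (f : I -> pt R T -> R) :
  (forall i, continuous_on1 A (f i)) -> continuous_on1 A (fun x => \prod_(i <- r) f i x).
Proof.
move=> cf; elim: r => [|a r IH].
  by apply: continuous_on1_ext (continuous_on1_cst 1) => x _; rewrite big_nil.
by apply: continuous_on1_ext (continuous_on1_mul (cf a) IH) => x _; rewrite big_cons.
Qed.

Lemma continuous_on1_exp f k : continuous_on1 A f -> continuous_on1 A (fun x => f x ^+ k).
Proof.
move=> cf; elim: k => [|k IH]; first exact: continuous_on1_cst.
by apply: continuous_on1_ext (continuous_on1_mul cf IH) => x _; rewrite exprS.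
Qed.

Lemma continuous_on1_polyfun f : polyfun f -> continuous_on1 A f.
Proof.
move=> [p Hp].
have peval_sum x : peval p x = \sum_(mo <- msupp p) p@_mo * \prod_i x (enum_val i) ^+ mo i.
  by rewrite /peval mevalE.
apply: continuous_on1_ext (fun x _ => esym (etrans (Hp x) (peval_sum x))) _.
apply: continuous_on1_sum => mo; apply: continuous_on1_mul; first exact: continuous_on1_cst.
by apply: continuous_on1_prod => i; apply/continuous_on1_exp/continuous_on1_coord.
Qed.

Lemma continuous_on_coordinatewise (T2 : finType) (f : pt R T -> pt R T2) :
  (forall j, continuous_on1 A (fun x => f x j)) -> continuous_on A f.
Proof.
move=> cf x Ax e e0.
suff [d d0 Hd] : exists2 d : R, 0 < d & forall y, A y ->
    (forall i, `|y i - x i| < d) -> forall j, j \in enum T2 -> `|f y j - f x j| < e.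
  by exists d => // y Ay Hy j; apply: Hd; rewrite ?mem_enum.
elim: (enum T2) => [|a s [d d0 Hd]]; first by exists 1.
have [da da0 Hda] := cf a x Ax e e0.
exists (Num.min d da) => [|y Ay Hy j]; first by rewrite lt_min d0.
have [Hyd Hyda] : (forall i, `|y i - x i| < d) /\ (forall i, `|y i - x i| < da).
  by split=> i; move: (Hy i); rewrite lt_min => /andP[].
by rewrite in_cons => /predU1P [->|/Hd]; [apply: Hda | apply].
Qed.

End ScalarContinuity.

(** * Semialgebraic isomorphisms from rational maps *)

Section RationalMaps.
Context {R : realType} {T1 T2 : finType}.
Implicit Types (A : pt R T1 -> Prop) (B : pt R T2 -> Prop) (f : pt R T1 -> pt R T2).

Definition rational_on A f (num den : T2 -> pt R T1 -> R) :=
  [/\ forall j, polyfun (num j), forall j, polyfun (den j) &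
      forall x, A x -> forall j, den j x != 0 /\ f x j = num j x / den j x].

Lemma rational_on_continuous A f num den : rational_on A f num den -> continuous_on A f.
Proof.
move=> [pnum pden fE]; apply: continuous_on_coordinatewise => j.
apply: continuous_on1_ext (fun x Ax => esym (fE x Ax j).2) _.
apply: continuous_on1_mul; first exact: continuous_on1_polyfun.
by apply: continuous_on1_inv (fun x Ax => (fE x Ax j).1) (continuous_on1_polyfun (pden j)).
Qed.

Lemma rational_on_graph A f num den :
  semialgebraic A -> rational_on A f num den -> semialgebraic (graph_on A f).
Proof.
move=> saA [pnum pden fE].
pose eqn j (z : pt R (T1 + T2)%type) :=
  z (inr j) * den j (pullback inl z) - num j (pullback inl z).
apply: (sa_ext (A := fun z => A (pullback inl z) /\ forall j, eqn j z = 0)).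
  move=> z; rewrite /graph_on -/(pullback inl z).
  split=> -[Az Hz]; split=> // j; have [den0 fj] := fE _ Az j.
    rewrite fj; apply: (canRL (mulfK den0)); apply/eqP; rewrite -subr_eq0; apply/eqP.
    exact: Hz.
  by rewrite /eqn Hz fj mulfVK // subrr.
apply: sa_inter; first exact: semialgebraic_pullback.
apply: semialgebraic_forall => j; apply: semialgebraic_eq0.
apply: polyfun_sub; last exact: polyfun_pullback.
by apply: polyfun_mul; [apply: polyfun_coord | apply: polyfun_pullback].
Qed.

Lemma sa_isomorphic_rational A B f g num den :
  semialgebraic A -> rational_on A f num den -> continuous_on B g ->
  (forall x, A x -> B (f x)) -> (forall y, B y -> A (g y)) ->
  (forall x, A x -> forall i, g (f x) i = x i) ->
  (forall y, B y -> forall j, f (g y) j = y j) -> sa_isomorphic A B.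
Proof.
move=> saA rat_f cg fAB gBA gfK fgK; exists f, g; split=> //; split=> //.
  exact: rational_on_continuous rat_f.
exact: rational_on_graph rat_f.
Qed.

Lemma sa_isomorphic_empty A B :
  (forall x, ~ A x) -> (forall y, ~ B y) -> sa_isomorphic A B.
Proof.
move=> A0 B0; exists (fun _ _ => 0), (fun _ _ => 0).
split=> [x /A0|y /B0|x /A0|y /B0|] //; split=> [x /A0|y /B0|] //.
by apply: sa_ext semialgebraic_False => z; split=> // -[/A0].
Qed.

End RationalMaps.

(** * The open simplex is semialgebraically R^k *)

Section InvertPsi.
Context {R : rcfType}.

(* psi s is the positive root r of r - r^-1 = s. *)
Definition psi (s : R) := (s + Num.sqrt (s ^+ 2 + 4)) / 2.

Lemma sqrtr_sqr_add4_gt (s : R) : `|s| < Num.sqrt (s ^+ 2 + 4).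
Proof.
by rewrite -sqrtr_sqr ltr_sqrt ?ltrDl // ltr_wpDl ?sqr_ge0.
Qed.

Lemma psi_gt0 s : 0 < psi s.
Proof.
rewrite divr_gt0 //; have := sqrtr_sqr_add4_gt s.
by have := ler_norm (- s); rewrite normrN; lra.
Qed.

Lemma psiK (r : R) : 0 < r -> psi (r - r^-1) = r.
Proof.
move=> r0; have r_neq0 : r != 0 by rewrite gt_eqF.
rewrite /psi (_ : (r - r^-1) ^+ 2 + 4 = (r + r^-1) ^+ 2); last by field.
by rewrite sqrtr_sqr gtr0_norm ?addr_gt0 ?invr_gt0 //; field.
Qed.

Lemma psi_subV (s : R) : psi s - (psi s)^-1 = s.
Proof.
set t := Num.sqrt (s ^+ 2 + 4).
have t2 : t ^+ 2 = s ^+ 2 + 4 by rewrite sqr_sqrtr // addr_ge0 ?sqr_ge0.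
have st : s + t != 0.
  by have := psi_gt0 s; rewrite /psi -/t => ?; rewrite gt_eqF //; lra.
rewrite /psi -/t.
have -> : (s + t) / 2 - ((s + t) / 2)^-1 = s + (t ^+ 2 - s ^+ 2 - 4) / (2 * (s + t)).
  by field; rewrite st.
by rewrite t2 (_ : s ^+ 2 + 4 - s ^+ 2 - 4 = 0) ?mul0r ?addr0 //; ring.
Qed.

End InvertPsi.

Lemma continuous_on1_psi (R : realType) (T : finType) (A : pt R T -> Prop) t :
  continuous_on1 A (fun q => psi (q t)).
Proof.
apply: continuous_on1_mul (continuous_on1_cst _).
apply: continuous_on1_add (continuous_on1_coord _) _.
apply: continuous_on1_sqrt => [q _|]; first by rewrite ltr_wpDl ?sqr_ge0.
exact/continuous_on1_add/continuous_on1_cst/continuous_on1_exp/continuous_on1_coord.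
Qed.

Section OpenSimplex.
Context {R : realType} {T : finType} {k : nat}.

Definition open_simplex (z : pt R 'I_k) := (forall l, 0 < z l) /\ \sum_l z l < 1.

Definition simplex_prod (W : pt R T -> Prop) : pt R (T + 'I_k)%type -> Prop :=
  fun p => W (pullback inl p) /\ open_simplex (pullback inr p).

Lemma semialgebraic_open_simplex : semialgebraic open_simplex.
Proof.
apply: (sa_ext (A := fun z => (forall l, 0 < z l) /\ 0 < 1 - \sum_l z l)).
  by move=> z; rewrite subr_gt0.
apply: sa_inter.
  by apply: semialgebraic_forall => l; apply/semialgebraic_gt0/polyfun_coord.
apply/semialgebraic_gt0/polyfun_sub; first exact: polyfun_cst.
by apply: polyfun_sum => l; apply: polyfun_coord.
Qed.

Lemma semialgebraic_simplex_prod W : semialgebraic W -> semialgebraic (simplex_prod W).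
Proof.
move=> saW; apply: sa_inter; first exact: semialgebraic_pullback.
exact: semialgebraic_pullback semialgebraic_open_simplex.
Qed.

Definition simplex_slack (p : pt R (T + 'I_k)%type) := 1 - \sum_l p (inr l).

Definition to_cyl (p : pt R (T + 'I_k)%type) : pt R (T + 'I_k)%type := fun t =>
  match t with
  | inl i => p (inl i)
  | inr l => p (inr l) / simplex_slack p - simplex_slack p / p (inr l)
  end.

Definition psi_total (q : pt R (T + 'I_k)%type) := 1 + \sum_l psi (q (inr l)).

Definition of_cyl (q : pt R (T + 'I_k)%type) : pt R (T + 'I_k)%type := fun t =>
  match t with
  | inl i => q (inl i)
  | inr l => psi (q (inr l)) / psi_total q
  end.

Lemma psi_total_gt0 q : 0 < psi_total q.
Proof. by apply: ltr_wpDr ltr01; apply: sumr_ge0 => l _; apply/ltW/psi_gt0. Qed.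

Lemma slack_of_cyl q : simplex_slack (of_cyl q) = (psi_total q)^-1.
Proof.
have tot0 := psi_total_gt0 q.
rewrite /simplex_slack /of_cyl /= -mulr_suml.
move: tot0; rewrite /psi_total; set S := \sum_l _ => tot0.
by field; rewrite lt0r_neq0.
Qed.

Lemma open_simplex_of_cyl q : open_simplex (pullback inr (of_cyl q)).
Proof.
have tot0 := psi_total_gt0 q.
split=> [l|]; first by rewrite /pullback /= divr_gt0 ?psi_gt0.
have := slack_of_cyl q; rewrite /simplex_slack => E.
by rewrite -subr_gt0 /pullback E invr_gt0.
Qed.

Lemma to_cylK W p : simplex_prod W p -> forall t, of_cyl (to_cyl p) t = p t.
Proof.
move=> [_ [z0 zsum]] [i|l] //=.
have c0 : 0 < simplex_slack p by rewrite subr_gt0.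
have to_cylE m : psi (to_cyl p (inr m)) = p (inr m) / simplex_slack p.
  by rewrite /= -[simplex_slack p / _]invf_div psiK ?divr_gt0 ?(z0 m).
rewrite /psi_total; under eq_bigr => m _ do rewrite to_cylE.
rewrite to_cylE -mulr_suml.
have : simplex_slack p + \sum_m p (inr m) = 1 by rewrite subrK.
move: c0; set c := simplex_slack p; set S := \sum_m _ => c0 cS.
have -> : 1 + S / c = (c + S) / c by field; rewrite lt0r_neq0.
by rewrite cS div1r invrK mulfVK ?lt0r_neq0.
Qed.

Lemma of_cylK q t : to_cyl (of_cyl q) t = q t.
Proof.
case: t => [i|l] //=; rewrite slack_of_cyl.
have tot0 := psi_total_gt0 q; have psi0 := psi_gt0 (q (inr l)).
rewrite -[RHS]psi_subV; congr (_ - _); first by rewrite invrK mulfVK ?gt_eqF.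
by rewrite invf_div mulrA mulVf ?mul1r ?lt0r_neq0.
Qed.


Lemma continuous_of_cyl A : continuous_on A of_cyl.
Proof.
apply: continuous_on_coordinatewise => -[i|l]; first exact: continuous_on1_coord.
apply: continuous_on1_mul (continuous_on1_psi _) _.
apply: continuous_on1_inv => [q _|]; first by rewrite lt0r_neq0 ?psi_total_gt0.
apply: continuous_on1_add (continuous_on1_cst _) _.
by apply: continuous_on1_sum => l'; apply: continuous_on1_psi.
Qed.

Lemma rational_to_cyl W : rational_on (simplex_prod W) to_cyl
  (fun t p => if t is inr l then p (inr l) ^+ 2 - simplex_slack p ^+ 2 else p t)
  (fun t p => if t is inr l then p (inr l) * simplex_slack p else 1).
Proof.
have poly_slack : polyfun simplex_slack.
  by apply: polyfun_sub (polyfun_cst _) _; apply: polyfun_sum => l; apply: polyfun_coord.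
split=> [[i|l]|[i|l]|p [_ [z0 zsum]] [i|l]].
- exact: polyfun_coord.
- by apply: polyfun_sub; apply: polyfun_exp => //; apply: polyfun_coord.
- exact: polyfun_cst.
- exact: polyfun_mul (polyfun_coord _) poly_slack.
- by rewrite divr1 oner_neq0.
have c0 : simplex_slack p != 0 by rewrite lt0r_neq0 // subr_gt0.
have z_neq0 : p (inr l) != 0 by rewrite lt0r_neq0 ?(z0 l).
by rewrite mulf_neq0 //; split=> //=; field; apply/andP.
Qed.

Lemma simplex_prod_cyl W : semialgebraic W -> sa_isomorphic (simplex_prod W) (@cyl R T k W).
Proof.
move=> saW.
apply: sa_isomorphic_rational (semialgebraic_simplex_prod saW) (rational_to_cyl W)
  _ _ _ _ _.
- exact: continuous_of_cyl.
- by move=> p [].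
- by move=> q Wq; split=> //; apply: open_simplex_of_cyl.
- exact: to_cylK.
- by move=> q _ t; apply: of_cylK.
Qed.

End OpenSimplex.

(** * Exponent vectors in the degree boxes *)

Lemma card_ord_leq (k e : nat) : (e < k)%N -> #|[pred a : 'I_k | (a <= e)%N]| = e.+1.
Proof.
move=> lt_ek; have widen_inj : injective (widen_ord lt_ek).
  by move=> a b /(congr1 val) /= /val_inj.
rewrite -[e.+1]card_ord -(card_image widen_inj).
apply: eq_card => a; rewrite inE; apply/idP/imageP => [le_ae|[b _ ->] /=].
  by exists (Ordinal (le_ae : (a < e.+1)%N)); last exact: val_inj.
by rewrite -ltnS.
Qed.

Section Slots.
Context {T : finType} (A : {set T}) (N : nat).
Hypothesis card_le : (#|A| <= N.+1)%N.

Definition slot (x : T) : 'I_N.+1 := inord (index x (enum A)).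
Definition slot_elem (k : 'I_N.+1) : option T := onth (enum A) k.

Lemma slot_val x : x \in A -> slot x = index x (enum A) :> nat.
Proof.
move=> Ax; rewrite inordK //; apply: leq_trans card_le.
by rewrite cardE index_mem mem_enum.
Qed.

Lemma slotK x : x \in A -> slot_elem (slot x) = Some x.
Proof.
move=> Ax; rewrite /slot_elem slot_val // onthE (nth_map x) ?nth_index ?mem_enum //.
by rewrite index_mem mem_enum.
Qed.

Lemma slot_elem_mem k x : slot_elem k = Some x -> x \in A.
Proof.
move=> kx; have lt_k : (k < size (enum A))%N by rewrite -onthTE -/(slot_elem k) kx.
have <- : nth x (enum A) k = x by apply: onth_nth kx.
by rewrite -mem_enum mem_nth.
Qed.

End Slots.

Lemma le_deg_in {R : realType} {n : nat} i (p : {mpoly R[n]}) a :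
  a \in msupp p -> (a i <= deg_in i p)%N.
Proof. by move=> a_supp; apply: (leq_bigmax_seq (F := fun mo : 'X_{1..n} => mo i)). Qed.

Section Monomials.
Context {R : realType} {n m : nat} (F : 'I_m -> {mpoly R[n]}).

Local Notation deg i j := (deg_in i (F j)).

Definition dmax := \max_(j < m) \max_(i < n) deg i j.
Definition monom := {ffun 'I_n -> 'I_dmax.+1}.
Definition mono0 : monom := [ffun _ => ord0].
Definition box_top j : monom := [ffun i => inord (deg i j)].
Definition box j : simpl_pred monom :=
  family (fun i => [pred a : 'I_dmax.+1 | (a <= deg i j)%N]).
Definition lower_box j := [set b | (b \in box j) && (b != box_top j)].
Definition lowers := \bigcup_(j < m) lower_box j.
Definition box_card j := (\prod_(i < n) (deg i j).+1)%N.

Lemma deg_le_dmax i j : (deg i j <= dmax)%N.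
Proof. exact: leq_trans (leq_bigmax (F := fun i => deg i j) i) (leq_bigmax j). Qed.

Lemma box_top_val i j : box_top j i = deg i j :> nat.
Proof. by rewrite ffunE inordK // ltnS deg_le_dmax. Qed.

Lemma in_boxP j (b : monom) : reflect (forall i, (b i <= deg i j)%N) (b \in box j).
Proof. by apply: (iffP familyP) => le_b i; move: (le_b i); rewrite inE. Qed.

Lemma card_box j : #|box j| = box_card j.
Proof.
rewrite card_family foldrE big_map big_enum /=.
by apply: eq_bigr => i _; rewrite card_ord_leq // ltnS deg_le_dmax.
Qed.

Lemma card_lower_box j : #|lower_box j| = (box_card j).-1.
Proof.
have top_in : box_top j \in box j by apply/in_boxP => i; rewrite box_top_val.
rewrite -card_box [in RHS](cardD1 (box_top j)) top_in /=.
by apply: eq_card => b; rewrite !inE andbC.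
Qed.

Implicit Types (b : monom).

Lemma card_lowers_le : (#|lowers| + m <= \sum_(j < m) box_card j)%N.
Proof.
have card_le : (#|lowers| <= \sum_(j < m) #|lower_box j|)%N.
  rewrite /lowers; elim/big_ind2: _ => //; first by rewrite cards0.
  by move=> a A b B le_a le_b; apply: leq_trans (leq_card_setU A B).1 (leq_add le_a le_b).
apply: (@leq_trans (\sum_(j < m) (#|lower_box j| + 1))%N).
  by rewrite big_split /= sum1_card card_ord leq_add2r.
apply: leq_sum => j _; rewrite card_lower_box addn1 prednK //.
by rewrite prodn_gt0.
Qed.

Definition decr (b : monom) (i : 'I_n) : monom :=
  [ffun t => if t == i then inord (b i).-1 else b t].

Lemma decr_val b i t : decr b i t = (if t == i then (b i).-1 else b t) :> nat.
Proof.
rewrite ffunE; case: ifP => // _.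
by rewrite inordK // (leq_ltn_trans (leq_pred _) (ltn_ord _)).
Qed.

Lemma decr_lowers j b i : b \in box j -> (0 < b i)%N -> decr b i \in lowers.
Proof.
move=> /in_boxP b_le b_gt0; apply/bigcupP; exists j => //; rewrite inE.
apply/andP; split.
  apply/in_boxP => t; rewrite decr_val; case: eqP => [->|_] //.
  exact: leq_trans (leq_pred _) (b_le i).
apply/eqP => /(congr1 (fun c : monom => c i : nat)); rewrite decr_val eqxx box_top_val.
by move: (b_le i); case: (b i : nat) b_gt0 => //= e _ le_e eq_e; rewrite -eq_e ltnn in le_e.
Qed.

Definition weight (b : monom) := (\sum_i b i)%N.

Lemma weight_decr b i : (0 < b i)%N -> (weight (decr b i) < weight b)%N.
Proof.
move=> b_gt0; rewrite /weight (bigD1 i) //= [X in (_ < X)%N](bigD1 i) //= decr_val eqxx.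
rewrite (eq_bigr (fun t => b t : nat)) => [|t /negbTE ti]; last by rewrite decr_val ti.
by rewrite ltn_add2r prednK.
Qed.

Definition xpow (x : 'I_n -> R) (b : monom) := \prod_i x i ^+ b i.

Lemma xpow_decr x b i : (0 < b i)%N -> x i * xpow x (decr b i) = xpow x b.
Proof.
move=> b_gt0; rewrite /xpow (bigD1 i) //= [RHS](bigD1 i) //= decr_val eqxx.
rewrite mulrA -exprS prednK //; congr (_ * _).
by apply: eq_bigr => t /negbTE ti; rewrite decr_val ti.
Qed.

Lemma xpow0 x : xpow x mono0 = 1.
Proof. by rewrite /xpow big1 // => i _; rewrite ffunE expr0. Qed.

Lemma xpow_gt0 x b : (forall i, 0 < x i) -> 0 < xpow x b.
Proof. by move=> x_gt0; rewrite prodr_gt0 // => i _; rewrite exprn_gt0. Qed.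

Definition monom_of (a : 'X_{1..n}) : monom := [ffun i => inord (a i)].

Lemma monom_of_val j a i : a \in msupp (F j) -> monom_of a i = a i :> nat.
Proof.
move=> a_supp.
by rewrite ffunE inordK // ltnS (leq_trans (le_deg_in i a_supp) (deg_le_dmax _ _)).
Qed.

Lemma monom_of_box j a : a \in msupp (F j) -> monom_of a \in box j.
Proof.
by move=> a_supp; apply/in_boxP => i; rewrite (monom_of_val _ a_supp) le_deg_in.
Qed.

Lemma meval_monom_of x j :
  (F j).@[x] = \sum_(a <- msupp (F j)) (F j)@_a * xpow x (monom_of a).
Proof.
rewrite mevalE; apply: eq_big_seq => a a_supp; congr (_ * _).
by apply: eq_bigr => i _; rewrite (monom_of_val _ a_supp).
Qed.

End Monomials.

(** * The relations imposed by player 3 *)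

Section Bilinear.
Context {R : comPzRingType} {N1 N2 : nat}.
Variables (s1 : 'I_N1 -> R) (s2 : 'I_N2 -> R).

Definition bilin (C : 'I_N1 -> 'I_N2 -> R) := \sum_a \sum_c C a c * (s1 a * s2 c).

Lemma bilinB C1 C2 : bilin (fun a c => C1 a c - C2 a c) = bilin C1 - bilin C2.
Proof.
rewrite /bilin -sumrB; apply: eq_bigr => a _; rewrite -sumrB.
by apply: eq_bigr => c _; rewrite mulrBl.
Qed.

Lemma bilin_sum (X : Type) (r : seq X) (w : X -> R) (C : X -> 'I_N1 -> 'I_N2 -> R) :
  bilin (fun a c => \sum_(t <- r) w t * C t a c) = \sum_(t <- r) w t * bilin (C t).
Proof.
rewrite /bilin.
under eq_bigr => a _ do under eq_bigr => c _ do rewrite mulr_suml.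
under eq_bigr => a _ do rewrite exchange_big /=.
rewrite exchange_big /=; apply: eq_bigr => t _.
rewrite mulr_sumr; apply: eq_bigr => a _; rewrite mulr_sumr; apply: eq_bigr => c _.
by rewrite -mulrA.
Qed.

Lemma sum_delta N (k : 'I_N) (g : 'I_N -> R) : \sum_c (c == k)%:R * g c = g k.
Proof.
rewrite (bigD1 k) //= eqxx mul1r big1 ?addr0 // => c /negbTE ->; exact: mul0r.
Qed.

Lemma bilin_delta_r k : bilin (fun a c => (c == k)%:R) = (\sum_a s1 a) * s2 k.
Proof. by rewrite /bilin mulr_suml; apply: eq_bigr => a _; rewrite sum_delta. Qed.

Lemma bilin_delta p q : bilin (fun a c => (a == p)%:R * (c == q)%:R) = s1 p * s2 q.
Proof.
rewrite /bilin -[RHS](sum_delta p (fun a => s1 a * s2 q)); apply: eq_bigr => a _.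
rewrite -(sum_delta q (fun c => (a == p)%:R * (s1 a * s2 c))).
by apply: eq_bigr => c _; rewrite !mulrA [_ * (a == p)%:R]mulrC.
Qed.

End Bilinear.

Section Relations.
Context {R : realType} {n m : nat} (F : 'I_m -> {mpoly R[n]}) (i0 : 'I_n) (j0 : 'I_m).
Hypothesis deg_gt0 : (0 < deg_in i0 (F j0))%N.

Local Notation monom := (monom F).
Local Notation mono0 := (mono0 F).
Local Notation lowers := (lowers F).
Local Notation monom_of := (monom_of F).
Implicit Types (b : monom).

Definition pivot b : 'I_n := odflt i0 [pick i | (0 < b i)%N].
Definition mpred b := decr b (pivot b).

Lemma pivot_gt0 b : b != mono0 -> (0 < b (pivot b))%N.
Proof.
rewrite /pivot; case: pickP => //= b0; case/eqP; apply/ffunP => i.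
by apply: val_inj; rewrite ffunE /=; move: (b0 i); rewrite lt0n => /negbFE/eqP.
Qed.

Lemma mpred_lowers j b : b \in box F j -> b != mono0 -> mpred b \in lowers.
Proof. by move=> b_box /pivot_gt0; apply: decr_lowers b_box. Qed.

Lemma weight_mpred b : b != mono0 -> (weight (mpred b) < weight b)%N.
Proof. by move/pivot_gt0; apply: weight_decr. Qed.

Lemma xpow_mpred x b : b != mono0 -> x (pivot b) * xpow x (mpred b) = xpow x b.
Proof. by move/pivot_gt0; apply: xpow_decr. Qed.

Lemma lowers_box b : b \in lowers -> exists j, b \in box F j.
Proof. by case/bigcupP=> j _; rewrite inE => /andP [b_box _]; exists j. Qed.

Lemma mono0_lowers : mono0 \in lowers.
Proof.
apply/bigcupP; exists j0 => //; rewrite inE; apply/andP; split.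
  by apply/in_boxP => i; rewrite ffunE.
apply/eqP => /(congr1 (fun b : monom => b i0 : nat)).
by rewrite ffunE box_top_val => eq0; move: deg_gt0; rewrite -eq0.
Qed.

Lemma box_card_sum_gt : (m < \sum_(j < m) box_card F j)%N.
Proof.
have box_card_gt0 j : (0 < box_card F j)%N by rewrite prodn_gt0.
have box_card_gt1 : (1 < box_card F j0)%N.
  rewrite /box_card (bigD1 i0) //=.
  have : (0 < \prod_(i < n | i != i0) (deg_in i (F j0)).+1)%N by rewrite prodn_gt0.
  by move: deg_gt0; move: (deg_in i0 (F j0)) (\prod_(i < n | i != i0) _)%N => a P; nia.
have others : (m - 1 <= \sum_(j < m | j != j0) box_card F j)%N.
  rewrite -[X in (X <= _)%N](_ : \sum_(j < m | j != j0) 1 = m - 1)%N.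
    by apply: leq_sum => j _; apply: box_card_gt0.
  by rewrite sum1_card cardC1 card_ord subn1.
rewrite (bigD1 j0) //=; move: others box_card_gt1 (ltn_ord j0).
by move: (box_card F j0) (\sum_(j < m | j != j0) _)%N => P S; lia.
Qed.

Definition nslots := (Dnum F - m)%N.

Lemma Dnum_box_card : Dnum F = (\sum_(j < m) box_card F j).-1.
Proof. by []. Qed.

Lemma Dnum_split : (Dnum F).+1 = (nslots.+1 + m)%N.
Proof. by have := box_card_sum_gt; rewrite /nslots Dnum_box_card; lia. Qed.

Lemma card_lowers_slots : (#|lowers| <= nslots.+1)%N.
Proof. by have := card_lowers_le F; rewrite /nslots Dnum_box_card; lia. Qed.

Definition slot_of b : 'I_nslots.+1 := slot lowers nslots b.
(* Unused slots carry the junk value mono0, like slot0. *)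
Definition slot_monom (k : 'I_nslots.+1) := odflt mono0 (slot_elem lowers k).
Definition slot0 := slot_of mono0.

Lemma slot_monomK b : b \in lowers -> slot_monom (slot_of b) = b.
Proof. by move=> b_low; rewrite /slot_monom slotK // card_lowers_slots. Qed.

Lemma slot_monom_lowers k : slot_monom k \in lowers.
Proof.
rewrite /slot_monom; case E : slot_elem => [b|] /=; last exact: mono0_lowers.
exact: slot_elem_mem E.
Qed.

(* Against geometric strategies y_k = x^(slot_monom k) y_slot0, this tensor
   evaluates to x_(pivot b) y_(mpred b) = x^b y_slot0. *)
Definition monom_tensor b (a : 'I_n.+1) (c : 'I_nslots.+1) : R :=
  if b == mono0 then (c == slot0)%:R
  else (a == lift ord0 (pivot b))%:R * (c == slot_of (mpred b))%:R.

Definition relation_coef (r : ('I_nslots.+1 + 'I_m)%type) a c : R :=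
  match r with
  | inl k => (c == k)%:R - monom_tensor (slot_monom k) a c
  | inr j => \sum_(al <- msupp (F j)) (F j)@_al * monom_tensor (monom_of al) a c
  end.

Lemma relation_coef_slot0 a c : relation_coef (inl slot0) a c = 0.
Proof.
by rewrite /= /monom_tensor slot_monomK ?mono0_lowers // eqxx subrr.
Qed.

Definition slot_norm (x : 'I_n -> R) := \sum_k xpow x (slot_monom k).

Lemma slot_norm_gt0 x : (forall i, 0 < x i) -> 0 < slot_norm x.
Proof.
move=> x_gt0; rewrite /slot_norm (bigD1 ord0) //= ltr_pwDl ?xpow_gt0 //.
by apply: sumr_ge0 => k _; apply/ltW/xpow_gt0.
Qed.

Lemma xpow_slot0 x : xpow x (slot_monom slot0) = 1.
Proof. by rewrite slot_monomK ?mono0_lowers ?xpow0. Qed.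

Section Solutions.
Variables (s1 : 'I_n.+1 -> R) (s2 : 'I_nslots.+1 -> R) (x : 'I_n -> R).
Hypotheses (s1_sum : \sum_a s1 a = 1) (s1_x : forall i, s1 (lift ord0 i) = x i).

Definition geometric := forall k, s2 k = xpow x (slot_monom k) * s2 slot0.

Lemma bilin_monom_tensor b : bilin s1 s2 (monom_tensor b) =
  if b == mono0 then s2 slot0 else x (pivot b) * s2 (slot_of (mpred b)).
Proof.
rewrite /monom_tensor; case: eqP => _; first by rewrite bilin_delta_r s1_sum mul1r.
by rewrite bilin_delta s1_x.
Qed.

Lemma bilin_monom_tensor_geometric j b : geometric -> b \in box F j ->
  bilin s1 s2 (monom_tensor b) = xpow x b * s2 slot0.
Proof.
move=> geo b_box; rewrite bilin_monom_tensor; case: eqP => [->|/eqP b0].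
  by rewrite xpow0 mul1r.
by rewrite geo slot_monomK ?(mpred_lowers b_box) // mulrA xpow_mpred.
Qed.

Lemma relations_geometric :
  (forall k, bilin s1 s2 (relation_coef (inl k)) = 0) -> geometric.
Proof.
move=> rel0.
suff geo_lt w k : (weight (slot_monom k) < w)%N ->
    s2 k = xpow x (slot_monom k) * s2 slot0.
  by move=> k; apply: geo_lt (ltnSn _).
elim: w k => [//|w IH] k lt_w.
have /eqP := rel0 k; rewrite /= bilinB bilin_delta_r s1_sum mul1r subr_eq0.
move/eqP => ->; rewrite bilin_monom_tensor; case: eqP => [->|/eqP b0].
  by rewrite xpow0 mul1r.
have b_low := slot_monom_lowers k; have [j b_box] := lowers_box b_low.
have pred_low := mpred_lowers b_box b0.
rewrite IH slot_monomK //; first by rewrite mulrA xpow_mpred.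
by rewrite ?slot_monomK //; apply: leq_trans (weight_mpred b0) _; rewrite -ltnS.
Qed.

Lemma geometric_slot_relation k :
  geometric -> bilin s1 s2 (relation_coef (inl k)) = 0.
Proof.
move=> geo; have [j b_box] := lowers_box (slot_monom_lowers k).
rewrite bilinB bilin_delta_r s1_sum mul1r.
by rewrite (bilin_monom_tensor_geometric geo b_box) geo subrr.
Qed.

Lemma geometric_poly_relation j :
  geometric -> bilin s1 s2 (relation_coef (inr j)) = (F j).@[x] * s2 slot0.
Proof.
move=> geo; rewrite bilin_sum (meval_monom_of F) mulr_suml.
apply: eq_big_seq => al al_supp.
by rewrite (bilin_monom_tensor_geometric geo (monom_of_box al_supp)) mulrA.
Qed.

Hypotheses (x_gt0 : forall i, 0 < x i) (s2_sum : \sum_c s2 c = 1).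

Lemma relationsP : (forall r, bilin s1 s2 (relation_coef r) = 0) <->
  [/\ zero_set F x & forall k, s2 k = xpow x (slot_monom k) / slot_norm x].
Proof.
have norm_neq0 := lt0r_neq0 (slot_norm_gt0 x_gt0).
split=> [rel0|[F0 s2E]].
  have geo := relations_geometric (fun k => rel0 (inl k)).
  have s2_slot0 : s2 slot0 = (slot_norm x)^-1.
    have : slot_norm x * s2 slot0 = 1.
      by rewrite -s2_sum /slot_norm mulr_suml; apply: eq_bigr => k _; rewrite [RHS]geo.
    by move/(canRL (mulKf norm_neq0)); rewrite mulr1.
  split=> [j|k]; last by rewrite geo s2_slot0.
  move: (rel0 (inr j)); rewrite geometric_poly_relation // s2_slot0 => /eqP.
  by rewrite mulf_eq0 invr_eq0 (negbTE norm_neq0) orbF => /eqP.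
have geo : geometric by move=> k; rewrite !s2E xpow_slot0 mul1r.
by case=> [k|j]; rewrite ?geometric_slot_relation ?geometric_poly_relation ?F0 ?mul0r.
Qed.

End Solutions.

End Relations.

(** * Three-player games *)

Section MixedProfiles.
Context {R : realType} {N : nat} {d : 'I_N -> nat}.
Local Notation sigma w i := (@sigma_of R N d w i).

Definition block (w : pt R (Defs.coord d)) (i : 'I_N) : 'I_(d i) -> R :=
  fun j => w (Tagged (fun i => 'I_(d i)) j).
Arguments block w i : clear implicits.

Lemma sigma_of_lift w i (j : 'I_(d i)) : sigma w i (lift ord0 j) = block w i j.
Proof. by rewrite /sigma_of liftK. Qed.

Lemma sigma_of_ord0 w i : sigma w i ord0 = 1 - \sum_j block w i j.
Proof. by rewrite /sigma_of unlift_none. Qed.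

Lemma sigma_of_sum w i : \sum_j sigma w i j = 1.
Proof.
rewrite big_ord_recl; under eq_bigr => j _ do rewrite sigma_of_lift.
by rewrite sigma_of_ord0 subrK.
Qed.

Lemma lt1_of_sum1 k (s : 'I_k -> R) (j j' : 'I_k) :
  (forall j, 0 < s j) -> \sum_j s j = 1 -> j != j' -> s j < 1.
Proof.
move=> s_gt0 s_sum jj'; rewrite -s_sum (bigD1 j) //= ltrDl.
rewrite (bigD1 j') 1?eq_sym //= ltr_pwDl //.
by apply: sumr_ge0 => l _; apply: ltW.
Qed.

Lemma sigma_of_gt0P w i : (forall j, 0 < sigma w i j) <-> open_simplex (block w i).
Proof.
split=> [pos | [blk_gt0 blk_sum] j].
  split=> [j|]; first by rewrite -sigma_of_lift.
  by have := pos ord0; rewrite sigma_of_ord0 subr_gt0.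
by case: (unliftP ord0 j) => [j' ->|->]; rewrite ?sigma_of_lift ?sigma_of_ord0 ?subr_gt0.
Qed.

Lemma TMNEP (u : payoffs R d) w : TMNE u w <->
  (forall i j, 0 < sigma w i j) /\
  (forall i j, @exp_payoff_pure R N d u (@sigma_of R N d w) i j =
               @exp_payoff_pure R N d u (@sigma_of R N d w) i ord0).
Proof.
split=> [[_ pos _ indiff] | [pos indiff]]; split=> //; first exact: sigma_of_sum.
by move=> i j j0; apply: lt1_of_sum1 j0 => //; apply: sigma_of_sum.
Qed.

End MixedProfiles.
Arguments block {R N d} w i _.

Definition p0 : 'I_3 := @Ordinal 3 0 isT.
Definition p1 : 'I_3 := @Ordinal 3 1 isT.
Definition p2 : 'I_3 := @Ordinal 3 2 isT.

Lemma I3P (t : 'I_3) : [\/ t = p0, t = p1 | t = p2].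
Proof.
case: t => [[|[|[|k]]] lt_k] //; [constructor 1|constructor 2|constructor 3];
  exact: val_inj.
Qed.

Section ThreePlayers.
Context {R : realType} {n m D : nat}.
Local Notation d := (game3_dims n m D).

Definition coord3 (a : 'I_n -> R) (b : 'I_(D - m) -> R) (c : 'I_D -> R) :
    pt R (Defs.coord d) := fun t =>
  match tag t as i return 'I_(d i) -> R with
  | @Ordinal _ k lt_k =>
    match k as k return (forall lt_k : (k < 3)%N, 'I_(d (Ordinal lt_k)) -> R) with
    | 0 => fun _ => a
    | 1 => fun _ => b
    | 2 => fun _ => c
    | _ => fun _ _ => 0
    end lt_k
  end (tagged t).

Lemma coord_cases (P : Defs.coord d -> Prop) :
  (forall j : 'I_n, P (Tagged (fun i => 'I_(d i)) (j : 'I_(d p0)))) ->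
  (forall j : 'I_(D - m), P (Tagged (fun i => 'I_(d i)) (j : 'I_(d p1)))) ->
  (forall j : 'I_D, P (Tagged (fun i => 'I_(d i)) (j : 'I_(d p2)))) ->
  forall t, P t.
Proof.
by move=> P0 P1 P2 [i j]; case: (I3P i) => E; subst i; [apply: P0 | apply: P1 | apply: P2].
Qed.

Definition third_player_game (C : 'I_D.+1 -> 'I_n.+1 -> 'I_(D - m).+1 -> R) :
    payoffs R d :=
  fun i s => if i == p2 then C (s p2) (s p0) (s p1) else 0.

Definition profile3 (a : 'I_n.+1) (b : 'I_(D - m).+1) (c : 'I_D.+1) : profile d :=
  [ffun t : 'I_3 => inord (if t == p0 then val a else if t == p1 then val b else val c)].

Lemma sum_profiles_p2 (g : 'I_n.+1 -> 'I_(D - m).+1 -> R) (c : 'I_D.+1) :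
  \sum_(s : profile d | s p2 == c) g (s p0) (s p1) = \sum_a \sum_b g a b.
Proof.
rewrite pair_bigA /= (reindex_onto (fun s : profile d => (s p0, s p1))
  (fun ab => profile3 ab.1 ab.2 c)).
  apply: eq_bigl => s; apply/eqP/eqP => [<-|<-]; last by rewrite ffunE inord_val.
  by apply/ffunP => t; rewrite ffunE; case: (I3P t) => ->; rewrite inord_val.
by move=> [a b] _; rewrite !ffunE !inord_val.
Qed.

Lemma exp_payoff_third C sigma (c : 'I_(d p2).+1) :
  @exp_payoff_pure R 3 d (third_player_game C) sigma p2 c =
  bilin (sigma p0) (sigma p1) (C c).
Proof.
rewrite /exp_payoff_pure /bilin.
rewrite -(sum_profiles_p2 (fun a b => C c a b * (sigma p0 a * sigma p1 b)) c).
apply: eq_bigr => s /eqP s_c; rewrite /third_player_game eqxx s_c; congr (_ * _).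
rewrite (bigD1 p0) // (bigD1 p1) //= big1 ?mulr1 // => t /andP [/andP [t2 t0] t1].
by case: (I3P t) t2 t0 t1 => ->.
Qed.

Lemma exp_payoff_other C sigma i (j : 'I_(d i).+1) : i != p2 ->
  @exp_payoff_pure R 3 d (third_player_game C) sigma i j = 0.
Proof.
move=> /negbTE i2; rewrite /exp_payoff_pure big1 // => s _.
by rewrite /third_player_game i2 mul0r.
Qed.

End ThreePlayers.

Section Construction.
Context {R : realType} {n m : nat} (F : 'I_m -> {mpoly R[n]}) (i0 : 'I_n) (j0 : 'I_m).
Hypothesis deg_gt0 : (0 < deg_in i0 (F j0))%N.
Hypothesis S_in_simplex : forall x : 'I_n -> R, zero_set F x ->
  (forall i, 0 < x i) /\ \sum_(i < n) x i < 1.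

Local Notation d := (game3_dims n m (Dnum F)).
Local Notation relation_coef := (relation_coef i0).
Local Notation S_times_simplex := (@simplex_prod R 'I_n (Dnum F) (zero_set F)).

Definition payoff3 (r : 'I_(Dnum F).+1) :=
  relation_coef (split (cast_ord (Dnum_split deg_gt0) r)).

Definition game : payoffs R d := third_player_game payoff3.

Lemma payoff3_unsplit rl :
  payoff3 (cast_ord (esym (Dnum_split deg_gt0)) (unsplit rl)) = relation_coef rl.
Proof. by rewrite /payoff3 cast_ordKV unsplitK. Qed.

(* The relation of slot0 vanishes identically, so indifference of player 3
   amounts to the vanishing of every relation. *)
Lemma indifference_relations (s1 : 'I_n.+1 -> R) (s2 : 'I_(nslots F).+1 -> R) :
  (forall r, bilin s1 s2 (payoff3 r) = bilin s1 s2 (payoff3 ord0)) <->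
  (forall rl, bilin s1 s2 (relation_coef rl) = 0).
Proof.
split=> [indiff rl | rel0 r]; last first.
  by rewrite /payoff3 !rel0.
have payoff3_ord0 : bilin s1 s2 (payoff3 ord0) = 0.
  rewrite -(indiff (cast_ord (esym (Dnum_split deg_gt0)) (unsplit (inl (slot0 F))))).
  rewrite payoff3_unsplit /bilin big1 // => a _; rewrite big1 // => c _.
  by rewrite (relation_coef_slot0 deg_gt0) mul0r.
by rewrite -payoff3_unsplit indiff.
Qed.

Definition outer_blocks (w : pt R (Defs.coord d)) : pt R ('I_n + 'I_(Dnum F))%type :=
  fun t => match t with inl i => block w p0 i | inr l => block w p2 l end.

Definition middle_strategy (x : 'I_n -> R) (k : 'I_(nslots F).+1) :=
  xpow x (slot_monom k) / slot_norm F x.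

Lemma TMNE_game w : TMNE game w <->
  [/\ S_times_simplex (outer_blocks w) &
       forall k, block w p1 k = middle_strategy (block w p0) (lift ord0 k)].
Proof.
rewrite TMNEP; split=> [[pos indiff] | [[F0 z_simplex] midE]].
  have [x_gt0 _] := (sigma_of_gt0P w p0).1 (pos p0).
  have rel0 : forall rl, bilin (sigma_of w (i := p0)) (sigma_of w (i := p1))
      (relation_coef rl) = 0.
    apply/indifference_relations => r.
    by rewrite -!exp_payoff_third; apply: indiff.
  have [F0 s2E] := (relationsP deg_gt0 (sigma_of_sum w p0) (@sigma_of_lift _ _ _ w p0)
    x_gt0 (sigma_of_sum w p1)).1 rel0.
  split=> [|k]; last by rewrite -sigma_of_lift s2E.
  by split=> //; apply/sigma_of_gt0P/pos.
have [x_gt0 x_sum] := S_in_simplex F0.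
have norm_gt0 := slot_norm_gt0 F x_gt0.
have s2E k : sigma_of w (i := p1) k = middle_strategy (block w p0) k.
  case: (unliftP ord0 k) => [k' ->|->]; first by rewrite sigma_of_lift midE.
  rewrite sigma_of_ord0; under eq_bigr do rewrite midE.
  have : \sum_k middle_strategy (block w p0) k = 1.
    by rewrite /middle_strategy -mulr_suml divff // lt0r_neq0.
  by rewrite big_ord_recl => <-; rewrite addrK.
have rel0 := (relationsP deg_gt0 (sigma_of_sum w p0) (@sigma_of_lift _ _ _ w p0) x_gt0
  (sigma_of_sum w p1)).2 (conj F0 s2E).
split=> i; case: (I3P i) => ->.
- exact/(sigma_of_gt0P w p0).
- by move=> j; rewrite s2E divr_gt0 ?xpow_gt0.
- exact/(sigma_of_gt0P w p2).
- by move=> j; rewrite !exp_payoff_other.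
- by move=> j; rewrite !exp_payoff_other.
by move=> j; rewrite !exp_payoff_third; apply: (indifference_relations _ _).2.
Qed.

Definition to_game (p : pt R ('I_n + 'I_(Dnum F))%type) : pt R (Defs.coord d) :=
  coord3 (pullback inl p) (fun k => middle_strategy (pullback inl p) (lift ord0 k))
    (pullback inr p).

Lemma polyfun_xpow (T : finType) (h : 'I_n -> T) (b : monom F) :
  polyfun (fun q : pt R T => xpow (pullback h q) b).
Proof. by apply: polyfun_prod => i; apply/polyfun_exp/polyfun_coord. Qed.

Lemma rational_to_game : rational_on S_times_simplex to_game
  (fun t p => coord3 (pullback inl p)
     (fun k => xpow (pullback inl p) (slot_monom (lift ord0 k))) (pullback inr p) t)
  (fun t p => coord3 (fun _ => 1) (fun _ => slot_norm F (pullback inl p)) (fun _ => 1) t).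
Proof.
split=> [t|t|p [/S_in_simplex [x_gt0 _] _] t]; elim/(@coord_cases n m (Dnum F)): t => j.
- exact: polyfun_coord.
- exact: polyfun_xpow.
- exact: polyfun_coord.
- exact: polyfun_cst.
- by apply: polyfun_sum => k; apply: polyfun_xpow.
- exact: polyfun_cst.
- by rewrite divr1 oner_neq0.
- by rewrite lt0r_neq0 ?slot_norm_gt0.
- by rewrite divr1 oner_neq0.
Qed.

Lemma simplex_prod_TMNE : sa_isomorphic S_times_simplex (TMNE game).
Proof.
have saS : semialgebraic S_times_simplex.
  exact/semialgebraic_simplex_prod/semialgebraic_zero_set.
have cont : continuous_on (TMNE game) outer_blocks.
  by apply: continuous_on_coordinatewise => -[i|l]; apply: continuous_on1_coord.
apply: (sa_isomorphic_rational saS rational_to_game cont).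
- by move=> p Sp; apply: (TMNE_game (to_game p)).2.
- by move=> w /TMNE_game [].
- by move=> p _ [i|l].
move=> w /TMNE_game [_ midE] t; elim/(@coord_cases n m (Dnum F)): t => j //=.
exact: esym (midE j).
Qed.

End Construction.

Section NoEquilibrium.
Context {R : realType} {N : nat} {d : 'I_N -> nat}.

Definition prefer0 (i : 'I_N) : payoffs R d :=
  fun i' s => if i' == i then (s i == ord0)%:R else 0.

Lemma prefer0_no_TMNE i w : (0 < d i)%N -> ~ TMNE (prefer0 i) w.
Proof.
move=> di_gt0 /TMNEP [pos indiff].
have := indiff i (lift ord0 (Ordinal di_gt0)).
rewrite /exp_payoff_pure big1 => [|s /eqP s_i]; last by rewrite /prefer0 eqxx s_i mul0r.
pose s0 : profile d := [ffun k => ord0].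
move/esym/eqP; apply/negP; rewrite lt0r_neq0 // (bigD1 s0) ?ffunE //=.
rewrite /prefer0 eqxx ffunE eqxx mul1r ltr_pwDl ?prodr_gt0 //.
by apply: sumr_ge0 => s _; rewrite mulr_ge0 ?ler0n ?prodr_ge0 // => k _; apply: ltW.
Qed.

End NoEquilibrium.

Lemma constant_zero_set_empty {R : realType} {n m : nat} (F : 'I_m -> {mpoly R[n]}) :
  (0 < n)%N -> (forall x, zero_set F x -> (forall i, 0 < x i)) ->
  (forall i j, deg_in i (F j) = 0%N) -> forall x, ~ zero_set F x.
Proof.
move=> n_gt0 S_pos deg0 x Fx.
have F_cst j y : (F j).@[y] = (F j).@[x].
  rewrite !mevalE; apply: eq_big_seq => a a_supp; congr (_ * _).
  apply: eq_bigr => i _; move: (le_deg_in i a_supp).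
  by rewrite deg0 leqn0 => /eqP ->; rewrite !expr0.
have F0 : zero_set F (fun _ => 0) by move=> j; rewrite F_cst Fx.
by have := S_pos _ F0 (Ordinal n_gt0); rewrite ltxx.
Qed.

Unset Implicit Arguments.
Set Strict Implicit.

Theorem theorem5 (R : realType) (n m : nat) (F : 'I_m -> {mpoly R[n]}) :
  (0 < n)%N ->
  (forall x : 'I_n -> R, zero_set F x ->
     (forall i, 0 < x i) /\ \sum_(i < n) x i < 1) ->
  exists u : payoffs R (game3_dims n m (Dnum F)),
    stably_isomorphic (zero_set F) (TMNE u).
Proof.
move=> n_gt0 S_in_simplex.
have [/existsP [i0 /existsP [j0 deg_gt0]] | /existsPn no_deg] :=
  boolP [exists i, exists j, (0 < deg_in i (F j))%N].
  exists (game deg_gt0); have saS := semialgebraic_zero_set F.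
  apply: st_trans (st_sym (st_proj (Dnum F) saS)) _.
  apply: st_trans (st_sym (st_iso (simplex_prod_cyl saS))) _.
  exact/st_iso/(simplex_prod_TMNE deg_gt0 S_in_simplex).
exists (prefer0 p0); apply/st_iso/sa_isomorphic_empty => [x | w].
  apply: constant_zero_set_empty n_gt0 (fun x Fx => (S_in_simplex x Fx).1) _ x.
  by move=> i j; move/existsPn: (no_deg i) => /(_ j); rewrite lt0n negbK => /eqP.
exact: prefer0_no_TMNE.
Qed.
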